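(* Let $\mathcal{X}=\mathbb{R}^d$ be the instance space and let $h:\mathcal{X}\to\{0,1\}$ be a fixed (oracle) instance-labeling function. For a finite bag (set) of instances $B\subset\mathcal{X}$, define the oracle bag label $\phi^*(B)=\max_{\mathbf{z}\in B} h(\mathbf{z})$ (the Boolean OR of the instance labels, with $\phi^*(\emptyset)=0$). Let $X$ be a random bag, and let $Y=\phi^*(X)$ be its label. Fix a candidate instance $\mathbf{x}\in\mathcal{X}$. Let $T\in\{0,1\}$ be a treatment indicator independent of $X$ with $0<P(T=1)<1$, and define the post-treatment label $$Y^*=\begin{cases}\phi^*(X\cup\{\mathbf{x}\}) & \text{if } T=1,\\ \phi^*(X\setminus\{\mathbf{x}\}) & \text{if } T=0.\end{cases}$$ Define the causal effect $\tau(\mathbf{x})=\mathbb{E}[Y^*\mid T=1]-\mathbb{E}[Y^*\mid T=0]$. Then $$\tau(\mathbf{x}) = P(Y=0)\cdot \mathbb{E}[Y^*\mid Y=0,\,T=1] + c,$$ where $c$ is the probability that the bag $X$ contains one and only one positive instance and that instance is $\mathbf{x}$, i.e. $c=P\big(\mathbf{x}\in X,\ h(\mathbf{x})=1,\ h(\mathbf{z})=0 \text{ for all } \mathbf{z}\in X\setminus\{\mathbf{x}\}\big)$.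
   Context: Multi-instance learning setting under the standard multi-instance assumption: a bag is positive (label 1) iff at least one of its instances is positive, and negative iff all instances are negative. ''Adding $\mathbf{x}$ to a bag'' is regarded as the treatment ($T=1$) and ''removing $\mathbf{x}$ from (or not including it in) a bag'' as the control ($T=0$); $Y^*$ is the bag label after treatment as given by the oracle classifier $\phi^*$. The term $P(Y=0)\cdot\mathbb{E}[Y^*\mid Y=0,T=1]$ is interpreted as $0$ when $P(Y=0)=0$. *)

From HB Require Import structures.
From mathcomp Require Import all_boot all_order all_algebra.
From mathcomp Require Import finmap.
From mathcomp Require Import all_classical all_reals all_analysis.
Set Implicit Arguments. Unset Strict Implicit. Unset Printing Implicit Defensive.
Import Order.TTheory GRing.Theory Num.Theory.
Local Open Scope classical_set_scope.
Local Open Scope ring_scope.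

Section MIL.
Context (R : realType) (n : nat).
Notation V := 'rV[R]_n.

Definition phi_star (h : V -> bool) (B : {fset V}) : bool :=
  has h (enum_fset B).

Context (dT : measure_display) (Om : measurableType dT) (P : probability Om R).

Definition pr (A : set Om) : R := fine (P A).

(* E[Z | A] for a {0,1}-valued random variable Z (Z = 1 iff the boolean is true);
   with the MathComp convention x / 0 = 0 it is 0 when P(A) = 0 *)
Definition condE01 (Z : Om -> bool) (A : set Om) : R :=
  pr (A `&` [set w | Z w]) / pr A.

Definition indep_bag_event (X : Om -> {fset V}) (A : set Om) : Prop :=
  forall S : set {fset V}, measurable (X @^-1` S) ->
    P (X @^-1` S `&` A) = (P (X @^-1` S) * P A)%E.

Definition Ystar (h : V -> bool) (X : Om -> {fset V}) (T : Om -> bool) (x : V)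
  (w : Om) : bool :=
  if T w then phi_star h (X w `|` [fset x])%fset
  else phi_star h (X w `\ x)%fset.

Definition tau (h : V -> bool) (X : Om -> {fset V}) (T : Om -> bool) (x : V) : R :=
  condE01 (Ystar h X T x) [set w | T w] - condE01 (Ystar h X T x) [set w | ~~ T w].

Definition c_event (h : V -> bool) (X : Om -> {fset V}) (x : V) : set Om :=
  [set w | [/\ x \in X w, h x & forall z, z \in X w -> z != x -> ~~ h z]].

End MIL.

From HB Require Import structures.
From mathcomp Require Import all_boot all_order all_algebra.
From mathcomp Require Import finmap.
From mathcomp Require Import all_classical all_reals all_analysis.
From mathcomp Require Import ring lra.
Import Order.TTheory GRing.Theory Num.Theory.
Local Open Scope classical_set_scope.
Local Open Scope ring_scope.

(* Since T is independent of X, E[Y* | T = 1] = P(Y+) and E[Y* | T = 0] = P(Y-),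
   where Y+ and Y- are the events that X u {x} and X \ {x} are positive bags;
   hence tau(x) = P(Y+) - P(Y-).  As Y- <= Y <= Y+, this difference splits as
   P(Y+ /\ ~Y) + P(Y /\ ~Y-).  By independence again the first term is
   P(Y = 0) E[Y* | Y = 0, T = 1]; the second is c, since removing x turns a
   positive bag negative exactly when x is its only positive instance. *)

Section Probability.
Context {R : realType} {dT : measure_display} {Om : measurableType dT}.
Context {P : probability Om R}.

Lemma pr_ge0 (A : set Om) : 0 <= pr P A.
Proof. exact: fine_ge0. Qed.

Lemma pr_setT : pr P setT = 1.
Proof. by rewrite /pr probability_setT. Qed.

Lemma pr_split {A B : set Om} : measurable A -> measurable B ->
  pr P A = pr P (A `&` B) + pr P (A `&` ~` B).
Proof.
move=> mA mB; have mAB := measurableI _ _ mA mB.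
have mACB := measurableI _ _ mA (measurableC mB).
rewrite /pr -fineD ?fin_num_measure // -measureU //.
  by rewrite -setIUr setUCr setIT.
by rewrite setIACA setICr setI0.
Qed.

Lemma pr_setC {A : set Om} : measurable A -> pr P (~` A) = 1 - pr P A.
Proof.
by move=> mA; rewrite -pr_setT (pr_split measurableT mA) !setTI addrC addKr.
Qed.

Lemma pr_subset_split {A B : set Om} : measurable A -> measurable B ->
  A `<=` B -> pr P B = pr P A + pr P (B `&` ~` A).
Proof. by move=> mA mB AB; rewrite (pr_split mB mA) (setIidr AB). Qed.

Lemma pr_indepC {A B : set Om} : measurable A -> measurable B ->
  pr P (A `&` B) = pr P A * pr P B -> pr P (A `&` ~` B) = pr P A * pr P (~` B).
Proof.
move=> mA mB indAB; rewrite pr_setC // mulrBr mulr1 -indAB.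
by rewrite [pr P A](pr_split mA mB) addrC addKr.
Qed.

Lemma indep_bag_event_pr {n : nat} {X : Om -> {fset 'rV[R]_n}} {A : set Om}
    (S : set {fset 'rV[R]_n}) :
  indep_bag_event P X A -> measurable A -> measurable (X @^-1` S) ->
  pr P (X @^-1` S `&` A) = pr P (X @^-1` S) * pr P A.
Proof. by move=> indXA mA mS; rewrite /pr indXA // fineM ?fin_num_measure. Qed.

Lemma condE01_indep {Z : Om -> bool} {A E : set Om} :
  A `&` [set w | Z w] = E `&` A -> pr P (E `&` A) = pr P E * pr P A ->
  pr P A != 0 -> condE01 P Z A = pr P E.
Proof. by move=> eAZ indEA A0; rewrite /condE01 eAZ indEA mulfK. Qed.

(* When P(B) = 0 the conditional expectation is the junk value 0, and then
   the inclusion E <= B forces P(E) = 0 as well. *)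
Lemma mul_condE01_indep {Z : Om -> bool} {A B E : set Om} :
  measurable B -> measurable E -> E `<=` B ->
  (B `&` A) `&` [set w | Z w] = E `&` A ->
  pr P (E `&` A) = pr P E * pr P A -> pr P (B `&` A) = pr P B * pr P A ->
  pr P A != 0 -> pr P B * condE01 P Z (B `&` A) = pr P E.
Proof.
move=> mB mE EB eBAZ indEA indBA A0.
rewrite /condE01 eBAZ indEA indBA.
have [B0 | B0] := eqVneq (pr P B) 0; last by field; apply/andP.
have := pr_subset_split mE mB EB; rewrite B0 mul0r.
by have := pr_ge0 E; have := pr_ge0 (B `&` ~` E); lra.
Qed.

End Probability.

Section Bags.
Context {R : realType} {n : nat} (h : 'rV[R]_n -> bool).

Lemma phi_star_subset (B C : {fset 'rV[R]_n}) :
  (B `<=` C)%fset -> phi_star h B -> phi_star h C.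
Proof. by move=> /fsubsetP BC /hasP [z /BC Cz hz]; apply/hasP; exists z. Qed.

Lemma phi_starPn (B : {fset 'rV[R]_n}) :
  reflect (forall z, z \in B -> ~~ h z) (~~ phi_star h B).
Proof. exact: hasPn. Qed.

Lemma phi_star_sole_positive (B : {fset 'rV[R]_n}) (x : 'rV[R]_n) :
  phi_star h B && ~~ phi_star h (B `\ x)%fset <->
  [/\ x \in B, h x & forall z, z \in B -> z != x -> ~~ h z].
Proof.
split.
  move=> /andP [/hasP [y By hy] /phi_starPn nhD].
  have others z : z \in B -> z != x -> ~~ h z.
    by move=> Bz zx; apply: nhD; rewrite in_fsetD1 zx.
  have yx : y = x by apply/eqP; apply: contraLR hy => /others; apply.
  by subst y; split.
move=> [Bx hx others]; apply/andP; split; first by apply/hasP; exists x.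
by apply/phi_starPn => z; rewrite in_fsetD1 => /andP [zx /others]; apply.
Qed.

Section Treatment.
Context {dT : measure_display} {Om : measurableType dT}.
Context (X : Om -> {fset 'rV[R]_n}) (T : Om -> bool) (x : 'rV[R]_n).

Lemma treated_Ystar :
  [set w | T w] `&` [set w | Ystar h X T x w] =
  [set w | phi_star h (X w `|` [fset x])%fset] `&` [set w | T w].
Proof. by apply/seteqP; split=> w /=; rewrite /Ystar; case: (T w) => -[]. Qed.

Lemma untreated_Ystar :
  ~` [set w | T w] `&` [set w | Ystar h X T x w] =
  [set w | phi_star h (X w `\ x)%fset] `&` ~` [set w | T w].
Proof. by apply/seteqP; split=> w /=; rewrite /Ystar; case: (T w) => -[]. Qed.

Lemma c_event_sole_positive :
  c_event h X x =
  [set w | phi_star h (X w)] `&` ~` [set w | phi_star h (X w `\ x)%fset].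
Proof.
apply/seteqP; split=> w /=.
  by move=> /phi_star_sole_positive /andP [? /negP].
by move=> [Yw /negP nYd]; apply/phi_star_sole_positive; rewrite Yw.
Qed.

End Treatment.
End Bags.

Theorem theorem1 (R : realType) (d : nat) (dT : measure_display)
  (Om : measurableType dT) (P : probability Om R)
  (h : 'rV[R]_d -> bool) (X : Om -> {fset 'rV[R]_d}) (T : Om -> bool)
  (x : 'rV[R]_d)
  (mT : measurable [set w | T w])
  (mY : measurable [set w | phi_star h (X w)])
  (mYU : measurable [set w | phi_star h (X w `|` [fset x])%fset])
  (mYD : measurable [set w | phi_star h (X w `\ x)%fset])
  (indep : indep_bag_event P X [set w | T w])
  (T_pos : 0 < pr P [set w | T w]) (T_lt1 : pr P [set w | T w] < 1) :
  tau P h X T x =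
    pr P [set w | ~~ phi_star h (X w)] *
      condE01 P (Ystar h X T x) ([set w | ~~ phi_star h (X w)] `&` [set w | T w])
    + pr P (c_event h X x).
Proof.
set T1 := [set w | T w]; set Y := [set w | phi_star h (X w)].
set Yu := [set w | phi_star h (X w `|` [fset x])%fset].
set Yd := [set w | phi_star h (X w `\ x)%fset].
rewrite /tau.
have -> : [set w | ~~ phi_star h (X w)] = ~` Y.
  by apply/seteqP; split=> w /= /negP.
have -> : [set w | ~~ T w] = ~` T1 by apply/seteqP; split=> w /= /negP.
have T1_neq0 : pr P T1 != 0 by rewrite gt_eqF.
have nT1_neq0 : pr P (~` T1) != 0 by rewrite pr_setC // subr_eq0 gt_eqF.
have mnY := measurableC mY.
have indYu : pr P (Yu `&` T1) = pr P Yu * pr P T1 :=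
  indep_bag_event_pr [set B | phi_star h (B `|` [fset x])%fset] indep mT mYU.
have indYd : pr P (Yd `&` T1) = pr P Yd * pr P T1 :=
  indep_bag_event_pr [set B | phi_star h (B `\ x)%fset] indep mT mYD.
have indnY : pr P (~` Y `&` T1) = pr P (~` Y) * pr P T1 :=
  indep_bag_event_pr [set B | ~ phi_star h B] indep mT mnY.
have indnYYu : pr P ((~` Y `&` Yu) `&` T1) = pr P (~` Y `&` Yu) * pr P T1 :=
  indep_bag_event_pr [set B | ~ phi_star h B /\ phi_star h (B `|` [fset x])%fset]
    indep mT (measurableI _ _ mnY mYU).
have sYdY : Yd `<=` Y by move=> w; apply: phi_star_subset; apply: fsubsetDl.
have sYYu : Y `<=` Yu by move=> w; apply: phi_star_subset; apply: fsubsetUl.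
rewrite (condE01_indep (treated_Ystar h X T x) indYu) //.
rewrite (condE01_indep (untreated_Ystar h X T x) (pr_indepC mYD mT indYd)) //.
rewrite (mul_condE01_indep (E := ~` Y `&` Yu)) //; first last.
- by rewrite -setIA treated_Ystar setIA.
- exact: measurableI.
rewrite c_event_sole_positive (pr_subset_split mY mYU sYYu).
by rewrite (pr_subset_split mYD mY sYdY) (setIC (~` Y)); lra.
Qed.
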